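(* Let $(\mathcal{S},\mathcal{A},P,R,d_0,\gamma)$ be a finite Markov decision process with bounded reward and discount $\gamma\in[0,1)$, $\pi$ a policy, and $\lambda\in[0,1]$, and assume the Markov chain on states induced by $\pi$ is ergodic, with stationary distribution $d^\pi$. Let $\overleftarrow{G}_t=\sum_{i=1}^t(\lambda\gamma)^iR_{t-i}$. Then the limit $\lim_{t\to\infty}\mathbb{E}[\overleftarrow{G}_t\mid S_t=s]=: \overleftarrow{v}^\pi(s)$ exists, and the operator $\overleftarrow{\mathcal{T}}$ on functions $v:\mathcal{S}\to\mathbb{R}$ defined by $$(\overleftarrow{\mathcal{T}}v)(s)=\lambda\gamma\,\overleftarrow{r}^\pi(s)+\lambda\gamma\sum_{s'}\overleftarrow{P}^\pi(s'\mid s)\,v(s')$$ is a contraction mapping (in the sup norm); hence repeatedly applying it converges to $\overleftarrow{v}^\pi$.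
   Context: Trajectories: $S_0\sim d_0$, $A_t\sim\pi(\cdot\mid S_t)$, $S_{t+1}\sim P(\cdot\mid S_t,A_t)$, $R_t=R(S_t,A_t)$. Let $\overrightarrow{P}^\pi(s'\mid s)=\sum_a\pi(a\mid s)P(s'\mid s,a)$. The backward transition kernel is $\overleftarrow{P}^\pi(s'\mid s)=d^\pi(s)^{-1}d^\pi(s')\overrightarrow{P}^\pi(s\mid s')$ (probability that the previous state was $s'$ given the current state $s$), and the backward reward is $\overleftarrow{r}^\pi(s)=\sum_{s',a'}P(s\mid s',a')d^\pi(s')\pi(a'\mid s')d^\pi(s)^{-1}R(s',a')$ (expected reward received upon entering $s$). *)

From HB Require Import structures.
From mathcomp Require Import all_boot all_order all_algebra.
From mathcomp Require Import all_classical all_reals all_analysis.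
Set Implicit Arguments. Unset Strict Implicit. Unset Printing Implicit Defensive.
Import Order.TTheory GRing.Theory Num.Theory.
Local Open Scope ring_scope.

Section MDP.
Variables (R : realType) (S A : finType).
(* P s a s' = P(s' | s, a); pi s a = pi(a | s); r s a = R(s,a). *)
Variables (P : S -> A -> S -> R) (pi : S -> A -> R) (r : S -> A -> R)
          (d0 : S -> R).

Definition is_distr (T : finType) (p : T -> R) :=
  (forall x, 0 <= p x) /\ \sum_x p x = 1.

Definition Pfwd (s s' : S) : R := \sum_a pi s a * P s a s'.

Fixpoint Pn (n : nat) (s s' : S) : R :=
  match n with
  | 0 => (s == s')%:R
  | n'.+1 => \sum_u Pn n' s u * Pfwd u s'
  end.

(* irreducible and aperiodic (period 1 at every state) *)
Definition irreducible := forall s s', exists n, 0 < Pn n s s'.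
Definition aperiodic := forall s (k : nat),
  (forall n, (0 < n)%N -> 0 < Pn n s s -> (k %| n)%N) -> k = 1%N.
Definition ergodic := irreducible /\ aperiodic.

Definition stationary (d : S -> R) :=
  is_distr d /\ forall s', \sum_s d s * Pfwd s s' = d s'.

(* probability of the trajectory prefix S_0,A_0,...,S_t,A_t *)
Definition traj_prob (t : nat) (ss : {ffun 'I_t.+1 -> S}) (aa : {ffun 'I_t.+1 -> A}) : R :=
  d0 (ss ord0) * (\prod_(k < t.+1) pi (ss k) (aa k)) *
  \prod_(k < t) P (ss (inord k)) (aa (inord k)) (ss (inord k.+1)).

Definition Gback (lam gam : R) (t : nat) (ss : {ffun 'I_t.+1 -> S}) (aa : {ffun 'I_t.+1 -> A}) : R :=
  \sum_(1 <= i < t.+1) (lam * gam) ^+ i * r (ss (inord (t - i))) (aa (inord (t - i))).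

Definition probSt (t : nat) (s : S) : R :=
  \sum_(ss : {ffun 'I_t.+1 -> S}) \sum_(aa : {ffun 'I_t.+1 -> A})
     (ss ord_max == s)%:R * traj_prob ss aa.

Definition EG (lam gam : R) (t : nat) (s : S) : R :=
  \sum_(ss : {ffun 'I_t.+1 -> S}) \sum_(aa : {ffun 'I_t.+1 -> A})
     (ss ord_max == s)%:R * Gback lam gam ss aa * traj_prob ss aa.

Definition cond_EG (lam gam : R) (t : nat) (s : S) : R := EG lam gam t s / probSt t s.

Definition Pback (d : S -> R) (s s' : S) : R := (d s)^-1 * d s' * Pfwd s' s.
Definition rback (d : S -> R) (s : S) : R :=
  \sum_s' \sum_a' P s' a' s * d s' * pi s' a' * (d s)^-1 * r s' a'.

Definition Tback (d : S -> R) (lam gam : R) (v : S -> R) : S -> R :=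
  fun s => lam * gam * rback d s + lam * gam * \sum_s' Pback d s s' * v s'.

End MDP.

Definition supnorm (R : realType) (S : finType) (v : S -> R) : R :=
  \big[Num.max/0]_s `|v s|.

(* Weighting by the stationary law d turns the backward recursion into a
   forward one.  The mass E_t(x) = E[G_t ; S_t = x] satisfies
   E_{t+1} = lam gam (rho_t + E_t P), where P is the forward state kernel and
   rho_t the expected reward flowing into each state from the law mu_t of S_t;
   likewise d (T v) = lam gam (rho + (d v) P) with rho the stationary inflow.
   T is a (lam gam)-contraction in sup norm because the backward kernel is
   stochastic, so it has a fixed point v.  Aperiodicity and irreducibility
   make some power of P entrywise positive, so mu_t -> d in l1 by Doeblin's
   argument; then the l1 distance e_t between E_t and d v obeys
   e_{t+1} <= lam gam e_t + o(1), hence E_t -> d v and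
   E[G_t | S_t = x] = E_t(x) / mu_t(x) -> v(x). *)

From HB Require Import structures.
From mathcomp Require Import all_boot all_order all_algebra.
From mathcomp Require Import all_classical all_reals all_analysis.
From mathcomp Require Import zify ring lra.
Import Order.TTheory GRing.Theory Num.Theory numFieldNormedType.Exports.
Local Open Scope ring_scope.
Local Open Scope classical_set_scope.
Set Implicit Arguments. Unset Strict Implicit.

Section AdditivelyClosed.
Variable G : nat -> Prop.
Hypothesis G0 : G 0.
Hypothesis GD : forall m n, G m -> G n -> G (m + n).
Hypothesis G_coprime :
  forall k, (forall n, (0 < n)%N -> G n -> (k %| n)%N) -> k = 1%N.

Lemma addclosed_mul k n : G n -> G (k * n).
Proof. by move=> Gn; elim: k => [|k IH]; rewrite ?mul0n // mulSn; apply: GD. Qed.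

Lemma addclosed_consecutive : exists q, G q /\ G q.+1.
Proof.
pose gap m := (0 < m)%N /\ exists q, G q /\ G (q + m).
have ex_gap : exists m, `[< gap m >].
  apply/not_existsP => no_gap; suff : 2%N = 1%N by [].
  apply: G_coprime => n n_gt0 Gn; exfalso; apply: (no_gap n); apply/asboolP.
  by split => //; exists 0%N; rewrite add0n.
case: (ex_minnP ex_gap) => g /asboolP [g_gt0 [q [Gq Gqg]]] g_min.
(* the least gap divides every element, since remainders mod g are gaps too *)
suff g1 : g = 1%N by exists q; rewrite -addn1 -g1.
apply: G_coprime => n n_gt0 Gn; rewrite /dvdn; apply/eqP.
case: (posnP (n %% g)) => // rem_gt0.
suff : (g <= n %% g)%N by rewrite leqNgt ltn_pmod.
apply: g_min; apply/asboolP; split => //.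
exists (n %/ g * (q + g))%N; split; first exact: addclosed_mul.
have -> : (n %/ g * (q + g) + n %% g = n %/ g * q + n)%N.
  by have := divn_eq n g; move: (n %/ g)%N (n %% g)%N => a b; nia.
by apply: GD => //; apply: addclosed_mul.
Qed.

Lemma addclosed_eventually : \forall n \near \oo, G n.
Proof.
have [q [Gq Gq1]] := addclosed_consecutive.
exists (q * q)%N => // n /= qq_le_n.
(* n = a (q + 1) + b q  with  a = n mod q  and  b = n div q - a *)
have -> : n = (n %% q * q.+1 + (n %/ q - n %% q) * q)%N.
  case: q {Gq Gq1} qq_le_n => [|q] qq_le_n; first by rewrite modn0 muln1 muln0 addn0.
  have : (n %% q.+1 <= n %/ q.+1)%N.
    by rewrite (leq_trans (ltnW (ltn_pmod _ _))) // leq_divRL.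
  by have := divn_eq n q.+1; move: (n %/ q.+1)%N (n %% q.+1)%N => a b; nia.
by apply: GD; apply: addclosed_mul.
Qed.

End AdditivelyClosed.

Section RealSequences.
Context {R : realType}.
Implicit Types (u e eps : R ^nat) (c l K : R).

Lemma cvg_sumr (I : finType) (u : I -> R ^nat) (l : I -> R) :
  (forall i, u i n @[n --> \oo] --> l i) ->
  \sum_i u i n @[n --> \oo] --> \sum_i l i.
Proof. by move=> ul; apply: cvg_big => //; exact: add_continuous. Qed.

Lemma cvg_sum_dist0 (I : finType) (u : I -> R ^nat) (l : I -> R) :
  (forall i, u i n @[n --> \oo] --> l i) ->
  \sum_i `|u i n - l i| @[n --> \oo] --> 0.
Proof.
move=> ul; rewrite [X in _ --> X](_ : _ = \sum_i `|l i - l i|); last first.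
  by rewrite big1 // => i _; rewrite subrr normr0.
apply: cvg_sumr => i; apply: cvg_norm; apply: cvgB => //; exact: cvg_cst.
Qed.

Lemma cvg_dist_le u e l : (forall n, `|u n - l| <= e n) ->
  e n @[n --> \oo] --> 0 -> u n @[n --> \oo] --> l.
Proof.
move=> ue e0; apply: (@squeeze_cvgr _ _ _ _ (fun n => l - e n) (fun n => l + e n)).
- by apply: nearW => n; rewrite -ler_distl.
- by rewrite -[X in _ --> X]subr0; apply: cvgB => //; exact: cvg_cst.
- by rewrite -[X in _ --> X]addr0; apply: cvgD => //; exact: cvg_cst.
Qed.

Lemma cvg_geometric_dist_le u l K c : 0 <= c -> c < 1 ->
  (forall n, `|u n - l| <= K * c ^+ n) -> u n @[n --> \oo] --> l.
Proof.
move=> c_ge0 c_lt1 uK; apply: cvg_dist_le uK _.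
by rewrite -(mulr0 K); apply: cvgMl_tmp; apply: cvg_expr; rewrite ger0_norm.
Qed.

Lemma nonincreasing_contract_cvg0 u N c : nonincreasing_seq u ->
  (forall n, 0 <= u n) -> c < 1 -> (forall n, u (n + N)%N <= c * u n) ->
  u n @[n --> \oo] --> 0.
Proof.
move=> u_noninc u_ge0 c_lt1 u_contr.
have u_cvg : u n @[n --> \oo] --> inf (range u).
  by apply: nonincreasing_cvgn => //; exists 0 => _ [n _ <-].
set L := inf (range u) in u_cvg *.
have L_ge0 : 0 <= L by apply: (ler_cvg_to (cvg_cst 0) u_cvg); apply: nearW.
have L_le : L <= c * L.
  have uN_cvg : u (n + N)%N @[n --> \oo] --> L by rewrite (cvg_shiftn N).
  by apply: (ler_cvg_to uN_cvg (cvgMl_tmp u_cvg)); exact: nearW.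
suff L0 : L = 0 by rewrite L0 in u_cvg.
by apply/eqP; rewrite eq_le L_ge0 andbT; nra.
Qed.

Lemma perturbed_contraction_cvg0 e eps c : (forall n, 0 <= e n) ->
  0 <= c -> c < 1 -> eps n @[n --> \oo] --> 0 ->
  (forall n, e n.+1 <= c * e n + eps n) -> e n @[n --> \oo] --> 0.
Proof.
move=> e_ge0 c_ge0 c_lt1 eps0 e_rec; apply/cvgrPdist_le => eta eta_gt0.
have [N _ epsN] : \forall n \near \oo, eps n <= (1 - c) * (eta / 2).
  by apply: (cvgr_le 0 eps0); rewrite mulr_gt0 ?subr_gt0 ?divr_gt0.
(* beyond N the excess of e over eta / 2 decays geometrically *)
have decay k : e (N + k)%N - eta / 2 <= c ^+ k * e N.
  elim: k => [|k IH]; first by rewrite addn0 expr0 mul1r gerBl divr_ge0 ?ltW.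
  have := e_rec (N + k)%N; have := epsN (N + k)%N (leq_addr _ _).
  have : c * (e (N + k)%N - eta / 2) <= c * (c ^+ k * e N) by rewrite ler_wpM2l.
  by rewrite addnS exprS; nra.
have [M _ geoM] : \forall k \near \oo, c ^+ k * e N <= eta / 2.
  apply: (cvgr_le 0); last by rewrite divr_gt0.
  by rewrite -(mul0r (e N)); apply: cvgMr_tmp; apply: cvg_expr; rewrite ger0_norm.
exists (N + M)%N => // n /= n_ge; rewrite sub0r normrN ger0_norm //.
have NM_le : (M <= n - N)%N by lia.
have := decay (n - N)%N; rewrite subnKC; last by lia.
by have := geoM _ NM_le; lra.
Qed.

Lemma cvgn_geometric_increments u K c : 0 <= c -> c < 1 ->
  (forall n, `|u n.+1 - u n| <= K * c ^+ n) -> cvgn u.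
Proof.
move=> c_ge0 c_lt1 du.
have K_ge0 : 0 <= K by have := du 0%N; rewrite expr0 mulr1; exact: le_trans.
have : cvgn (series (telescope u)).
  apply: normed_cvg; apply: (@series_le_cvg _ _ (geometric K c)) => //=.
  - by move=> n; apply: mulr_ge0 => //; exact: exprn_ge0.
  - by apply: is_cvg_geometric_series; rewrite ger0_norm.
move=> tele_cvg; rewrite (funext (eq_sum_telescope u)).
by apply: is_cvgD => //; exact: is_cvg_cst.
Qed.

End RealSequences.

Section SupNorm.
Context {R : realType} {S : finType}.
Implicit Types (v w : S -> R).

Lemma le_supnorm v s : `|v s| <= supnorm v.
Proof. exact: (le_bigmax _ (fun s => `|v s|) s). Qed.

Lemma supnorm_le v K : 0 <= K -> (forall s, `|v s| <= K) -> supnorm v <= K.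
Proof. by move=> K_ge0 vK; apply: bigmax_le => // s _; exact: vK. Qed.

Lemma supnorm_ge0 v : 0 <= supnorm v.
Proof. by rewrite /supnorm; elim/big_ind: _ => // x y x_ge0 _; rewrite le_max x_ge0. Qed.

Lemma supnorm_le_sum v : supnorm v <= \sum_s `|v s|.
Proof.
apply: supnorm_le => [|s]; first exact: sumr_ge0.
by rewrite (bigD1 s) //= lerDl sumr_ge0.
Qed.

Variables (T : (S -> R) -> S -> R) (c : R).
Hypotheses (c_ge0 : 0 <= c) (c_lt1 : c < 1).
Hypothesis T_contraction : forall v w,
  supnorm (fun s => T v s - T w s) <= c * supnorm (fun s => v s - w s).

Lemma iter_contraction n v w :
  supnorm (fun s => iter n T v s - iter n T w s) <=
  c ^+ n * supnorm (fun s => v s - w s).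
Proof.
elim: n => [|n IH]; first by rewrite expr0 mul1r.
by apply: le_trans (T_contraction _ _) _; rewrite exprS -mulrA ler_wpM2l.
Qed.

Lemma contraction_fixpoint :
  exists2 vb, T vb = vb & forall v s, iter n T v s @[n --> \oo] --> vb s.
Proof.
pose x n := iter n T (fun=> 0).
have x_cvg s : cvgn (fun n => x n s).
  apply: (@cvgn_geometric_increments _ _ (supnorm (fun s => T (fun=> 0) s - 0)) c) => // n.
  apply: le_trans (le_supnorm (fun s => x n.+1 s - x n s) s) _.
  by rewrite mulrC /x iterSr; apply: iter_contraction.
pose vb s := limn (fun n => x n s).
have x_vb s : x n s @[n --> \oo] --> vb s by exact: x_cvg.
have T_vb : T vb = vb.
  apply/funext => s.
  have xS_Tvb : x n.+1 s @[n --> \oo] --> T vb s.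
    apply: (@cvg_dist_le _ _ (fun n => c * \sum_s `|x n s - vb s|)).
      move=> n; apply: le_trans (le_supnorm (fun s => T (x n) s - T vb s) s) _.
      apply: le_trans (T_contraction _ _) _.
      by rewrite ler_wpM2l // supnorm_le_sum.
    have sum0 := cvg_sum_dist0 x_vb.
    by rewrite -[X in _ --> X](mulr0 c); apply: cvgMl_tmp.
  have xS_vb : x n.+1 s @[n --> \oo] --> vb s by rewrite (cvg_shiftS (fun n => x n s)).
  exact: (cvg_unique _ xS_Tvb xS_vb).
exists vb => // v s.
apply: (@cvg_geometric_dist_le _ _ _ (supnorm (fun s => v s - vb s)) c) => // n.
rewrite -{1}(iter_fix n T_vb) mulrC.
exact: le_trans (le_supnorm (fun s => iter n T v s - iter n T vb s) s) (iter_contraction _ _ _).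
Qed.

End SupNorm.

Section StochasticKernel.
Context {R : realType} {S : finType}.
Implicit Types (Q : S -> S -> R) (delta : S -> R).

Lemma l1_kernel_le {Q rho delta} : (forall s x, 0 <= Q s x) ->
  (forall s, \sum_x Q s x = rho) ->
  \sum_x `|\sum_s delta s * Q s x| <= rho * \sum_s `|delta s|.
Proof.
move=> Q_ge0 Q_rows.
apply: le_trans (_ : \sum_x \sum_s `|delta s| * Q s x <= _).
  apply: ler_sum => x _; apply: le_trans (ler_norm_sum _ _ _) _.
  by apply: ler_sum => s _; rewrite normrM (ger0_norm (Q_ge0 s x)).
rewrite exchange_big mulr_sumr; apply: ler_sum => s _ /=.
by rewrite -mulr_sumr Q_rows mulrC.
Qed.

(* Doeblin: subtracting the uniform floor eps from Q leaves a nonnegative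
   kernel of mass 1 - eps |S| and does not change the image of a signed
   measure of total mass zero. *)
Lemma l1_kernel_doeblin {Q eps delta} : (forall s x, eps <= Q s x) ->
  (forall s, \sum_x Q s x = 1) -> \sum_s delta s = 0 ->
  \sum_x `|\sum_s delta s * Q s x| <= (1 - eps * #|S|%:R) * \sum_s `|delta s|.
Proof.
move=> Q_ge Q_rows delta0.
have floor x : \sum_s delta s * Q s x = \sum_s delta s * (Q s x - eps).
  by under [RHS]eq_bigr do rewrite mulrBr; rewrite sumrB -mulr_suml delta0 mul0r subr0.
under eq_bigr do rewrite floor.
apply: l1_kernel_le => [s x|s]; first by rewrite subr_ge0.
by rewrite sumrB Q_rows sumr_const mulr_natr.
Qed.

End StochasticKernel.

Section MarkovChain.
Context {R : realType} {S A : finType}.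
Variables (P : S -> A -> S -> R) (pi : S -> A -> R).
Hypothesis P_distr : forall s a, is_distr (P s a).
Hypothesis pi_distr : forall s, is_distr (pi s).

Local Notation Pfwd := (Pfwd P pi).
Local Notation Pn := (Pn P pi).

Lemma Pfwd_ge0 s x : 0 <= Pfwd s x.
Proof.
by apply: sumr_ge0 => a _; apply: mulr_ge0; [exact: (pi_distr s).1 | exact: (P_distr s a).1].
Qed.

Lemma Pfwd_row_sum s : \sum_x Pfwd s x = 1.
Proof.
rewrite exchange_big /= -(pi_distr s).2; apply: eq_bigr => a _.
by rewrite -mulr_sumr (P_distr s a).2 mulr1.
Qed.

Definition push (m : S -> R) x := \sum_s m s * Pfwd s x.

Lemma sum_indicator (m : S -> R) x : \sum_s m s * (s == x)%:R = m x.
Proof. by rewrite (bigD1 x) //= eqxx mulr1 big1 ?addr0 // => s /negPf ->; rewrite mulr0. Qed.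

Lemma iter_push n m x : iter n push m x = \sum_s m s * Pn n s x.
Proof.
elim: n x => [|n IH] x /=; first by rewrite sum_indicator.
change (\sum_u iter n push m u * Pfwd u x = \sum_s m s * Pn n.+1 s x).
under eq_bigr do rewrite IH mulr_suml.
rewrite exchange_big /=; apply: eq_bigr => s _.
by rewrite mulr_sumr; apply: eq_bigr => u _; rewrite mulrA.
Qed.

Lemma PnD m n s x : Pn (m + n) s x = \sum_u Pn m s u * Pn n u x.
Proof.
rewrite -iter_push; elim: n x => [|n IH] x; first by rewrite addn0.
by rewrite addnS /=; apply: eq_bigr => u _; rewrite IH.
Qed.

Lemma Pn_ge0 n s x : 0 <= Pn n s x.
Proof.
elim: n x => [|n IH] x /=; first by rewrite ler0n.
by apply: sumr_ge0 => u _; apply: mulr_ge0 => //; exact: Pfwd_ge0.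
Qed.

Lemma Pn_row_sum n s : \sum_x Pn n s x = 1.
Proof.
elim: n => [|n IH] /=.
  by rewrite (bigD1 s) //= eqxx big1 ?addr0 // => x /negPf; rewrite eq_sym => ->.
rewrite exchange_big /= -IH; apply: eq_bigr => u _.
by rewrite -mulr_sumr Pfwd_row_sum mulr1.
Qed.

Lemma PnD_ge m n s u x : Pn m s u * Pn n u x <= Pn (m + n) s x.
Proof.
rewrite PnD (bigD1 u) //= lerDl; apply: sumr_ge0 => v _.
by apply: mulr_ge0; exact: Pn_ge0.
Qed.

Lemma ergodic_Pn_gt0 : ergodic P pi -> \forall n \near \oo, forall s x, 0 < Pn n s x.
Proof.
move=> [irr aper]; apply: filter_forall => s; apply: filter_forall => x.
have [M _ ret_s] : \forall n \near \oo, 0 < Pn n s s.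
  apply: addclosed_eventually => [|m n Pm Pn_|k]; first by rewrite /= eqxx ltr01.
    by apply: lt_le_trans (PnD_ge m n s s s); exact: mulr_gt0.
  exact: aper.
have [k Pk] := irr s x.
exists (M + k)%N => // n /= n_ge; have k_le : (k <= n)%N by lia.
rewrite -(subnK k_le); apply: lt_le_trans (PnD_ge _ _ s s x); apply: mulr_gt0 => //.
by apply: ret_s; rewrite /=; lia.
Qed.

Lemma ergodic_doeblin : ergodic P pi ->
  exists N (eps : R), 0 < eps /\ forall s x, eps <= Pn N s x.
Proof.
move=> /ergodic_Pn_gt0[N _ /(_ N (leqnn N)) PN_gt0].
exists N, (\big[Order.min/1]_(p : S * S) Pn N p.1 p.2); split.
  by apply: lt_bigmin => // p _; exact: PN_gt0.
by move=> s x; exact: (bigmin_le _ (s, x)).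
Qed.


Lemma sum_iter_push n m : \sum_x iter n push m x = \sum_s m s.
Proof.
elim: n => [|n IH] //=; rewrite -IH exchange_big /=; apply: eq_bigr => s _.
by rewrite -mulr_sumr Pfwd_row_sum mulr1.
Qed.

Lemma l1_push_le m m' : \sum_x `|push m x - push m' x| <= \sum_s `|m s - m' s|.
Proof.
rewrite -[X in _ <= X]mul1r; apply: le_trans (l1_kernel_le Pfwd_ge0 Pfwd_row_sum).
by apply: ler_sum => x _; rewrite -sumrB; under eq_bigr do rewrite -mulrBl.
Qed.

Section Stationary.
Variable d : S -> R.
Hypothesis d_stationary : stationary P pi d.
Hypothesis chain_ergodic : ergodic P pi.

Lemma push_stationary : push d = d.
Proof. by apply/funext => x; exact: d_stationary.2. Qed.

Lemma stationary_gt0 x : 0 < d x.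
Proof.
have [N [eps [eps_gt0 PN_ge]]] := ergodic_doeblin chain_ergodic.
rewrite -(iter_fix N push_stationary) iter_push; apply: lt_le_trans eps_gt0 _.
rewrite -[X in X <= _]mulr1 -d_stationary.1.2 mulr_sumr; apply: ler_sum => s _.
by rewrite mulrC ler_wpM2l //; exact: d_stationary.1.1.
Qed.

Lemma iter_push_cvg m x : \sum_s m s = 1 -> iter t push m x @[t --> \oo] --> d x.
Proof.
move=> m1; have [N [eps [eps_gt0 PN_ge]]] := ergodic_doeblin chain_ergodic.
pose D t := \sum_y `|iter t push m y - d y|.
have D_shift t k : D (t + k)%N = \sum_y `|\sum_s (iter t push m s - d s) * Pn k s y|.
  apply: eq_bigr => y _.
  have d_y : d y = \sum_s d s * Pn k s y by rewrite -iter_push iter_fix // push_stationary.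
  rewrite addnC iterD iter_push d_y -sumrB.
  by under [in RHS]eq_bigr do rewrite mulrBl.
apply: (@cvg_dist_le _ _ D) => [t|].
  by rewrite /D (bigD1 x) //= lerDl sumr_ge0.
apply: (@nonincreasing_contract_cvg0 _ _ N (1 - eps * #|S|%:R)).
- apply/nonincreasing_seqP => t; rewrite -addn1 D_shift -[leRHS]mul1r.
  exact: l1_kernel_le (Pn_ge0 1) (Pn_row_sum 1).
- by move=> t; apply: sumr_ge0.
- by rewrite gtrBl mulr_gt0 // ltr0n; apply/card_gt0P; exists x.
move=> t; rewrite D_shift; apply: l1_kernel_doeblin PN_ge (Pn_row_sum N) _.
by rewrite sumrB sum_iter_push m1 d_stationary.1.2 subrr.
Qed.

End Stationary.

End MarkovChain.

Lemma inord_max n : inord n = ord_max :> 'I_n.+1.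
Proof. by apply: val_inj; rewrite /= inordK. Qed.

Section FfunRcons.
Context {V : nmodType} {T : finType} {t : nat}.
Implicit Types (f : {ffun 'I_t.+1 -> T}) (x : T).

Definition ffun_rcons f x : {ffun 'I_t.+2 -> T} :=
  [ffun i : 'I_t.+2 => if (i < t.+1)%N then f (inord i) else x].

Lemma ffun_rcons_inord f x (i : nat) :
  (i < t.+1)%N -> ffun_rcons f x (inord i) = f (inord i).
Proof. by move=> lt_it; rewrite ffunE inordK ?lt_it // (leq_trans lt_it). Qed.

Lemma ffun_rcons_max f x : ffun_rcons f x ord_max = x.
Proof. by rewrite ffunE /= ltnn. Qed.

Lemma sum_ffun_rcons (F : {ffun 'I_t.+2 -> T} -> V) :
  \sum_g F g = \sum_f \sum_x F (ffun_rcons f x).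
Proof.
rewrite pair_big /= (reindex (fun p => ffun_rcons p.1 p.2)) //.
apply: onW_bij.
exists (fun g : {ffun 'I_t.+2 -> T} => ([ffun i : 'I_t.+1 => g (inord i)], g ord_max)).
  move=> [f x] /=; rewrite ffun_rcons_max; congr pair; apply/ffunP => i.
  by rewrite ffunE ffun_rcons_inord // inord_val.
move=> g; apply/ffunP => i; rewrite ffunE.
case: ifP => lt_it; last first.
  suff -> : i = ord_max by [].
  by apply: val_inj => /=; apply/eqP; rewrite eqn_leq -ltnS ltn_ord leqNgt lt_it.
by rewrite ffunE; congr (g _); apply: val_inj; rewrite /= !inordK // (leq_trans lt_it).
Qed.

End FfunRcons.

Lemma sum_ffun1 {V : nmodType} {T : finType} (F : {ffun 'I_1 -> T} -> V) :
  \sum_f F f = \sum_x F [ffun=> x].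
Proof.
rewrite (reindex (fun x : T => [ffun=> x])) //.
apply: onW_bij; exists (fun f : {ffun 'I_1 -> T} => f ord0); first by move=> x; rewrite ffunE.
by move=> f; apply/ffunP => i; rewrite !ffunE (ord1 i).
Qed.

Section Trajectories.
Context {R : realType} {S A : finType}.
Variables (P : S -> A -> S -> R) (pi : S -> A -> R) (r : S -> A -> R) (d0 : S -> R).
Variables lam gam : R.

Local Notation traj_prob := (traj_prob P pi d0).
Local Notation Gback := (Gback r lam gam).
Local Notation push := (push P pi).

Lemma sum_traj_rcons t (F : {ffun 'I_t.+2 -> S} -> {ffun 'I_t.+2 -> A} -> R) :
  \sum_ss \sum_aa F ss aa =
  \sum_(ss : {ffun 'I_t.+1 -> S}) \sum_(aa : {ffun 'I_t.+1 -> A}) \sum_(x : S) \sum_(y : A)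
    F (ffun_rcons ss x) (ffun_rcons aa y).
Proof.
rewrite sum_ffun_rcons; apply: eq_bigr => ss _.
under eq_bigr do rewrite sum_ffun_rcons.
by rewrite exchange_big.
Qed.

Lemma traj_prob1 s a :
  traj_prob ([ffun=> s] : {ffun 'I_1 -> S}) ([ffun=> a] : {ffun 'I_1 -> A}) = d0 s * pi s a.
Proof. by rewrite /traj_prob big_ord1 big_ord0 !ffunE mulr1. Qed.

Lemma traj_prob_rcons t (ss : {ffun 'I_t.+1 -> S}) (aa : {ffun 'I_t.+1 -> A}) x y :
  traj_prob (ffun_rcons ss x) (ffun_rcons aa y) =
  traj_prob ss aa * (P (ss ord_max) (aa ord_max) x * pi x y).
Proof.
have pi_prod : \prod_(k < t.+2) pi (ffun_rcons ss x k) (ffun_rcons aa y k) =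
    (\prod_(k < t.+1) pi (ss k) (aa k)) * pi x y.
  rewrite big_ord_recr /= !ffun_rcons_max; congr (_ * _); apply: eq_bigr => i _.
  by rewrite -[widen_ord _ i]inord_val !ffun_rcons_inord //= inord_val.
have P_prod : \prod_(k < t.+1) P (ffun_rcons ss x (inord k)) (ffun_rcons aa y (inord k))
      (ffun_rcons ss x (inord k.+1)) =
    (\prod_(k < t) P (ss (inord k)) (aa (inord k)) (ss (inord k.+1))) *
    P (ss ord_max) (aa ord_max) x.
  rewrite big_ord_recr /=; congr (_ * _).
    apply: eq_bigr => i _.
    by rewrite !ffun_rcons_inord ?ltnS ?ltn_ord ?(ltnW (ltn_ord i)).
  by rewrite inord_max ffun_rcons_max !ffun_rcons_inord // inord_max.
have rcons_ord0 : ffun_rcons ss x ord0 = ss ord0.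
  by rewrite ffunE /=; congr (ss _); apply: val_inj; rewrite /= inordK.
rewrite /traj_prob pi_prod P_prod rcons_ord0; ring.
Qed.

Lemma Gback1 (ss : {ffun 'I_1 -> S}) (aa : {ffun 'I_1 -> A}) : Gback ss aa = 0.
Proof. by rewrite /Gback big_geq. Qed.

Lemma Gback_rcons t (ss : {ffun 'I_t.+1 -> S}) (aa : {ffun 'I_t.+1 -> A}) x y :
  Gback (ffun_rcons ss x) (ffun_rcons aa y) =
  lam * gam * (r (ss ord_max) (aa ord_max) + Gback ss aa).
Proof.
rewrite /Gback big_ltn // big_add1 /= subn1 /= expr1 !ffun_rcons_inord // inord_max.
rewrite mulrDr mulr_sumr; congr (_ + _); apply: eq_bigr => i _.
by rewrite subSS !ffun_rcons_inord ?ltnS ?leq_subr // exprS mulrA.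
Qed.

Definition next_expect (phi : S -> A -> R) s a :=
  \sum_x \sum_y P s a x * pi x y * phi x y.

Definition inflow (m : S -> R) (w : S -> A -> R) x :=
  \sum_s \sum_a m s * pi s a * w s a * P s a x.

Lemma sum_next_expect m w phi :
  \sum_s \sum_a m s * pi s a * (w s a * next_expect phi s a) =
  \sum_x \sum_y inflow m w x * pi x y * phi x y.
Proof.
rewrite pair_big [RHS]pair_big /=.
transitivity (\sum_(p : S * A) \sum_(q : S * A)
    m p.1 * pi p.1 p.2 * w p.1 p.2 * P p.1 p.2 q.1 * pi q.1 q.2 * phi q.1 q.2).
  apply: eq_bigr => -[s a] _; rewrite /next_expect pair_big !mulr_sumr.
  by apply: eq_bigr => -[x y] _ /=; ring.
rewrite exchange_big; apply: eq_bigr => -[x y] _ /=.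
by rewrite /inflow pair_big !mulr_suml; apply: eq_bigr => -[s a] _ /=; ring.
Qed.

Lemma inflow1 m x : inflow m (fun _ _ => 1) x = push m x.
Proof.
apply: eq_bigr => s _; rewrite /Pfwd mulr_sumr.
by apply: eq_bigr => a _; rewrite mulr1 mulrA.
Qed.

Fixpoint EGrec t x :=
  if t is t'.+1 then
    lam * gam * (inflow (iter t' push d0) r x + push (EGrec t') x)
  else 0.

Lemma sum_traj_last t phi :
  \sum_(ss : {ffun 'I_t.+1 -> S}) \sum_(aa : {ffun 'I_t.+1 -> A})
    phi (ss ord_max) (aa ord_max) * traj_prob ss aa =
  \sum_s \sum_a iter t push d0 s * pi s a * phi s a.
Proof.
elim: t phi => [|t IH] phi.
  rewrite sum_ffun1; apply: eq_bigr => s _; rewrite sum_ffun1; apply: eq_bigr => a _.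
  by rewrite traj_prob1 !ffunE /=; ring.
rewrite sum_traj_rcons.
transitivity (\sum_(ss : {ffun 'I_t.+1 -> S}) \sum_(aa : {ffun 'I_t.+1 -> A})
    next_expect phi (ss ord_max) (aa ord_max) * traj_prob ss aa).
  apply: eq_bigr => ss _; apply: eq_bigr => aa _.
  rewrite /next_expect !mulr_suml; apply: eq_bigr => x _.
  rewrite mulr_suml; apply: eq_bigr => y _.
  by rewrite !ffun_rcons_max traj_prob_rcons; ring.
rewrite IH; under eq_bigr do under eq_bigr do rewrite -[next_expect _ _ _]mul1r.
by rewrite sum_next_expect; under eq_bigr do rewrite inflow1.
Qed.

Lemma sum_traj_last_Gback t phi :
  \sum_(ss : {ffun 'I_t.+1 -> S}) \sum_(aa : {ffun 'I_t.+1 -> A})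
    phi (ss ord_max) (aa ord_max) * Gback ss aa * traj_prob ss aa =
  \sum_s \sum_a EGrec t s * pi s a * phi s a.
Proof.
elim: t phi => [|t IH] phi.
  rewrite big1 => [|ss _]; last by rewrite big1 // => aa _; rewrite Gback1 mulr0 mul0r.
  by rewrite big1 // => s _; rewrite big1 // => a _; rewrite !mul0r.
rewrite sum_traj_rcons.
transitivity (
  lam * gam * \sum_(ss : {ffun 'I_t.+1 -> S}) \sum_(aa : {ffun 'I_t.+1 -> A})
    (r (ss ord_max) (aa ord_max) * next_expect phi (ss ord_max) (aa ord_max)) *
    traj_prob ss aa +
  lam * gam * \sum_(ss : {ffun 'I_t.+1 -> S}) \sum_(aa : {ffun 'I_t.+1 -> A})
    next_expect phi (ss ord_max) (aa ord_max) * Gback ss aa * traj_prob ss aa).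
  rewrite !mulr_sumr -big_split; apply: eq_bigr => ss _.
  rewrite !mulr_sumr -big_split; apply: eq_bigr => aa _ /=.
  transitivity (lam * gam * (r (ss ord_max) (aa ord_max) + Gback ss aa) *
    traj_prob ss aa * next_expect phi (ss ord_max) (aa ord_max)); last by ring.
  rewrite /next_expect !mulr_sumr; apply: eq_bigr => x _.
  rewrite !mulr_sumr; apply: eq_bigr => y _.
  by rewrite !ffun_rcons_max Gback_rcons traj_prob_rcons; ring.
rewrite (sum_traj_last t (fun s a => r s a * next_expect phi s a)) IH.
under [in X in _ + X]eq_bigr do under eq_bigr do rewrite -[next_expect _ _ _]mul1r.
rewrite !sum_next_expect !mulr_sumr -big_split; apply: eq_bigr => x _.
rewrite !mulr_sumr -big_split; apply: eq_bigr => y _ /=.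
by rewrite inflow1; ring.
Qed.

Hypothesis pi_distr : forall s, is_distr (pi s).

Lemma sum_pi_indicator (m : S -> R) s :
  \sum_s' \sum_a m s' * pi s' a * (s' == s)%:R = m s.
Proof.
under eq_bigr do rewrite -mulr_suml -mulr_sumr (pi_distr _).2 mulr1.
exact: sum_indicator.
Qed.

Lemma probSt_iter_push t s : probSt P pi d0 t s = iter t push d0 s.
Proof.
rewrite -[RHS]sum_pi_indicator.
exact: (sum_traj_last t (fun s' _ => (s' == s)%:R)).
Qed.

Lemma EG_EGrec t s : EG P pi r d0 lam gam t s = EGrec t s.
Proof.
rewrite -[RHS]sum_pi_indicator.
exact: (sum_traj_last_Gback t (fun s' _ => (s' == s)%:R)).
Qed.

End Trajectories.

Section BackwardBellman.
Context {R : realType} {S A : finType}.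
Variables (P : S -> A -> S -> R) (pi : S -> A -> R) (r : S -> A -> R) (d : S -> R).
Variables lam gam : R.
Hypothesis P_distr : forall s a, is_distr (P s a).
Hypothesis pi_distr : forall s, is_distr (pi s).
Hypothesis d_stationary : stationary P pi d.
Hypothesis chain_ergodic : ergodic P pi.
Hypotheses (gam_ge0 : 0 <= gam) (gam_lt1 : gam < 1).
Hypotheses (lam_ge0 : 0 <= lam) (lam_le1 : lam <= 1).

Local Notation T := (Tback P pi r d lam gam).
Local Notation push := (push P pi).
Local Notation inflow := (inflow P pi).

Let d_gt0 : forall x, 0 < d x := stationary_gt0 P_distr pi_distr d_stationary chain_ergodic.

Lemma discount_ge0 : 0 <= lam * gam. Proof. exact: mulr_ge0. Qed.

Lemma discount_lt1 : lam * gam < 1.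
Proof. by apply: le_lt_trans gam_lt1; rewrite ler_piMl. Qed.

Lemma Pback_ge0 s s' : 0 <= Pback P pi d s s'.
Proof.
apply: mulr_ge0; last exact: Pfwd_ge0.
by rewrite mulr_ge0 ?invr_ge0 ?ltW.
Qed.

Lemma Pback_row_sum s : \sum_s' Pback P pi d s s' = 1.
Proof.
rewrite /Pback; under eq_bigr do rewrite -mulrA.
by rewrite -mulr_sumr d_stationary.2 mulVf // gt_eqF.
Qed.

Lemma Tback_contraction v w :
  supnorm (fun s => T v s - T w s) <= lam * gam * supnorm (fun s => v s - w s).
Proof.
apply: supnorm_le => [|s]; first by rewrite mulr_ge0 ?discount_ge0 ?supnorm_ge0.
have -> : T v s - T w s = lam * gam * \sum_s' Pback P pi d s s' * (v s' - w s').
  rewrite /Tback [in RHS](eq_bigr _ (fun s' _ => mulrBr _ _ _)) sumrB; ring.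
rewrite normrM ger0_norm ?discount_ge0 // ler_wpM2l ?discount_ge0 //.
apply: le_trans (ler_norm_sum _ _ _) _.
rewrite -[leRHS]mul1r -(Pback_row_sum s) mulr_suml; apply: ler_sum => s' _.
by rewrite normrM ger0_norm ?Pback_ge0 // ler_wpM2l ?Pback_ge0 // le_supnorm.
Qed.

Lemma Tback_mass v x :
  d x * T v x = lam * gam * (inflow d r x + push (fun s => d s * v s) x).
Proof.
have dx_neq0 : d x != 0 by rewrite gt_eqF.
rewrite /Tback mulrDr [RHS]mulrDr !(mulrCA (d x)); congr (_ * _ + _ * _).
  rewrite /rback mulr_sumr; apply: eq_bigr => s _.
  by rewrite mulr_sumr; apply: eq_bigr => a _; field.
by rewrite /Pback mulr_sumr; apply: eq_bigr => s _; field.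
Qed.

Variable d0 : S -> R.
Hypothesis d0_distr : is_distr d0.

Local Notation EGrec := (EGrec P pi r d0 lam gam).

Lemma state_law_cvg x : iter t push d0 x @[t --> \oo] --> d x.
Proof.
exact: (iter_push_cvg P_distr pi_distr d_stationary chain_ergodic (x := x) d0_distr.2).
Qed.

Lemma inflow_iter_push_cvg x : inflow (iter t push d0) r x @[t --> \oo] --> inflow d r x.
Proof.
apply: cvg_sumr => s; apply: cvg_sumr => a.
by apply: cvgMr_tmp; apply: cvgMr_tmp; apply: cvgMr_tmp; exact: state_law_cvg.
Qed.

Lemma EGrec_cvg vb : T vb = vb -> forall x, EGrec t x @[t --> \oo] --> d x * vb x.
Proof.
move=> vb_fix; pose E x := d x * vb x.
have E_fix x : E x = lam * gam * (inflow d r x + push E x).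
  by rewrite /E -{1}vb_fix Tback_mass.
pose err t := \sum_x `|EGrec t x - E x|.
have err_step t : err t.+1 <= lam * gam * err t +
    lam * gam * \sum_x `|inflow (iter t push d0) r x - inflow d r x|.
  have diff x : EGrec t.+1 x - E x = lam * gam *
      ((inflow (iter t push d0) r x - inflow d r x) + (push (EGrec t) x - push E x)).
    by rewrite E_fix /=; ring.
  rewrite /err; under eq_bigr do rewrite diff normrM (ger0_norm discount_ge0).
  rewrite -mulr_sumr addrC -mulrDr ler_wpM2l ?discount_ge0 //.
  apply: le_trans (ler_sum _ (fun x _ => ler_normD _ _)) _.
  by rewrite big_split /= lerD2l l1_push_le.
have err_cvg0 : err t @[t --> \oo] --> 0.
  apply: perturbed_contraction_cvg0 err_step => //.
  - by move=> t; apply: sumr_ge0.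
  - exact: discount_ge0.
  - exact: discount_lt1.
  rewrite -[X in _ --> X](mulr0 (lam * gam)); apply: cvgMl_tmp.
  exact: cvg_sum_dist0 inflow_iter_push_cvg.
move=> x; apply: cvg_dist_le err_cvg0 => t.
by rewrite /err (bigD1 x) //= lerDl sumr_ge0.
Qed.

Lemma cond_EG_cvg vb : T vb = vb ->
  forall s, cond_EG P pi r d0 lam gam t s @[t --> \oo] --> vb s.
Proof.
move=> vb_fix s; have ds_neq0 : d s != 0 by rewrite gt_eqF.
rewrite (_ : vb s = d s * vb s / d s); last by field.
have -> : (fun t => cond_EG P pi r d0 lam gam t s) = (fun t => EGrec t s / iter t push d0 s).
  by apply/funext => t; rewrite /cond_EG EG_EGrec // probSt_iter_push.
by apply: cvgM; [exact: EGrec_cvg | apply: cvgV => //; exact: state_law_cvg].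
Qed.

End BackwardBellman.

Theorem theorem4p3 (R : realType) (S A : finType)
  (P : S -> A -> S -> R) (pi : S -> A -> R) (r : S -> A -> R) (d0 : S -> R)
  (gam lam : R) (d : S -> R) :
  (forall s a, is_distr (P s a)) ->
  (forall s, is_distr (pi s)) ->
  is_distr d0 ->
  0 <= gam -> gam < 1 ->
  0 <= lam -> lam <= 1 ->
  ergodic P pi ->
  stationary P pi d ->
  exists vb : S -> R,
    (forall s, cond_EG P pi r d0 lam gam t s @[t --> \oo] --> vb s) /\
    (exists c : R, 0 <= c /\ c < 1 /\
       forall v w : S -> R,
         supnorm (fun s => Tback P pi r d lam gam v s - Tback P pi r d lam gam w s)
         <= c * supnorm (fun s => v s - w s)) /\
    (forall (v0 : S -> R) (s : S),
       iter n (Tback P pi r d lam gam) v0 s @[n --> \oo] --> vb s).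
Proof.
move=> P_distr pi_distr d0_distr gam_ge0 gam_lt1 lam_ge0 lam_le1 erg stat.
have c_ge0 := discount_ge0 gam_ge0 lam_ge0.
have c_lt1 := discount_lt1 gam_ge0 gam_lt1 lam_le1.
have T_contraction := Tback_contraction r P_distr pi_distr stat erg gam_ge0 lam_ge0.
have [vb vb_fix iter_cvg] := contraction_fixpoint c_ge0 c_lt1 T_contraction.
exists vb; split; last by split; [exists (lam * gam) | exact: iter_cvg].
by move=> s; apply: (cond_EG_cvg P_distr pi_distr stat erg).
Qed.
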